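(* Let $(A,\succ,\prec)$ be an anti-pre-Novikov algebra and $s\in A\otimes A$. Then $s$ is invariant if and only if for all $x\in A$, $\zeta\in A^*$: $L_{\star}(x)T_s(\zeta)+T_s(L_{\succ}^*(x)\zeta)=0$ and $L_{\odot}(x)T_s(\zeta)+T_s(L_{\circ}^*(x)\zeta)=0$. Moreover, these two identities hold (for all $x,\zeta$) if and only if for all $\zeta,\eta\in A^*$: $L_{\star}^*(T_s(\zeta))\eta=R_{\succ}^*(T_{\tau(s)}(\eta))\zeta$ and $R_{\odot}^*(T_s(\zeta))\eta=R_{\circ}^*(T_{\tau(s)}(\eta))\zeta$.
   Context: $A$ is finite-dimensional over a field $k$. An anti-pre-Novikov algebra is $(A,\succ,\prec)$ such that with $x\circ y=x\succ y+x\prec y$: $(x\circ y-y\circ x)\succ z=y\succ(x\succ z)-x\succ(y\succ z)$; $x\prec(y\circ z)=(y\succ x)\prec z-(x\prec y)\prec z-y\succ(x\prec z)$; $(x\circ y)\succ z=-(x\succ z)\prec y$; $(x\prec y)\prec z=(x\prec z)\prec y$; $(x\circ y-y\circ x)\prec z=x\succ(y\circ z)-y\succ(x\circ z)$. Notation: $L_\ast(x)y=x\ast y$, $R_\ast(x)y=y\ast x$ for $\ast\in\{\succ,\prec,\circ\}$; $L_{\star}=L_{\circ}+R_{\circ}$, $L_{\odot}=L_{\succ}+R_{\prec}$, $R_{\odot}=R_{\succ}+L_{\prec}$; for $f:A\to\mathrm{End}(A)$, $\langle f^*(x)\zeta,y\rangle=-\langle\zeta,f(x)y\rangle$; $\tau$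 is the flip; $T_s:A^*\to A$, $\langle T_s(\zeta),\eta\rangle=\langle s,\zeta\otimes\eta\rangle$. $s$ is called invariant if $(I\otimes L_{\star}(x)-L_{\succ}(x)\otimes I)s=0$ and $(L_{\circ}(x)\otimes I-I\otimes L_{\odot}(x))s=0$ for all $x\in A$. *)

From HB Require Import structures.
From mathcomp Require Import all_boot all_order all_algebra.
Set Implicit Arguments. Unset Strict Implicit. Unset Printing Implicit Defensive.
Import GRing.Theory.
Local Open Scope ring_scope.

(* Conventions: a finite-dimensional k-space A is identified with
   k^n = 'rV[K]_n (standard basis ebase i); A^* is identified with 'rV[K]_n via
   the standard pairing <zeta, y> = sum_i zeta_i y_i; A (x) A is identified with
   'M[K]_n, the matrix s standing for sum_{i,j} s i j e_i (x) e_j. *)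

Section APN.
Variables (K : fieldType) (n : nat).
Notation A := 'rV[K]_n.

Definition ebase (i : 'I_n) : A := delta_mx 0 i.

Definition dpair (zeta y : A) : K := \sum_i zeta 0 i * y 0 i.

(* (f (x) g) s  for maps f g : A -> A *)
Definition tmap (f g : A -> A) (s : 'M[K]_n) : 'M[K]_n :=
  \sum_i \sum_j s i j *: ((f (ebase i))^T *m g (ebase j)).

Definition tpair (s : 'M[K]_n) (zeta eta : A) : K :=
  \sum_i \sum_j s i j * zeta 0 i * eta 0 j.

(* T_s : A^* -> A, <T_s zeta, eta> = <s, zeta (x) eta> *)
Definition Ts (s : 'M[K]_n) (zeta : A) : A := \row_j tpair s zeta (ebase j).

Definition tflip (s : 'M[K]_n) : 'M[K]_n := s^T.

(* f^* for f : A -> End(A):  <f^*(x) zeta, y> = - <zeta, f(x) y> *)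
Definition dualop (f : A -> A -> A) (x zeta : A) : A :=
  \row_j (- dpair zeta (f x (ebase j))).

Variables (succ prec : A -> A -> A).

Definition circ x y := succ x y + prec x y.
Definition Lsucc x y := succ x y.
Definition Rsucc x y := succ y x.
Definition Lcirc x y := circ x y.
Definition Rcirc x y := circ y x.
Definition Lstar x y := Lcirc x y + Rcirc x y.
Definition Lodot x y := Lsucc x y + prec y x.
Definition Rodot x y := Rsucc x y + prec x y.

Definition bilinear_op (op : A -> A -> A) : Prop :=
  (forall (a : K) u v y, op (a *: u + v) y = a *: op u y + op v y) /\
  (forall (a : K) x u v, op x (a *: u + v) = a *: op x u + op x v).

Definition anti_pre_Novikov : Prop :=
  bilinear_op succ /\ bilinear_op prec /\
  (forall x y z, succ (circ x y - circ y x) z = succ y (succ x z) - succ x (succ y z)) /\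
  (forall x y z, prec x (circ y z) = prec (succ y x) z - prec (prec x y) z - succ y (prec x z)) /\
  (forall x y z, succ (circ x y) z = - prec (succ x z) y) /\
  (forall x y z, prec (prec x y) z = prec (prec x z) y) /\
  (forall x y z, prec (circ x y - circ y x) z = succ x (circ y z) - succ y (circ x z)).

Definition invariant_tensor (s : 'M[K]_n) : Prop :=
  (forall x, tmap id (Lstar x) s - tmap (Lsucc x) id s = 0) /\
  (forall x, tmap (Lcirc x) id s - tmap id (Lodot x) s = 0).

End APN.

From HB Require Import structures.
From mathcomp Require Import all_boot all_order all_algebra.
Import GRing.Theory.
Set Implicit Arguments. Unset Strict Implicit. Unset Printing Implicit Defensive.
Local Open Scope ring_scope.

(* In coordinates A = 'rV_n, A (x) A = 'M_n and T_s zeta = zeta s.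
   For bilinear F, G put D(x) = (I (x) F(x) - G(x) (x) I) s, which is the matrix
   s [F x] - [G x]^T s with [f] = lin1_mx f.  Then
   F(x) T_s zeta + T_s (G^*(x) zeta) = zeta D(x), and the i-th coordinate of
   F'^*(T_s zeta) eta - G'^*(T_(tau s) eta) zeta, where F', G' are the opposite
   products, is - zeta D(e_i) eta^T.  As D is linear in x, both families of
   identities say that D vanishes.  Invariance of s is the vanishing of D for
   (F, G) = (L_star, L_succ) and (L_odot, L_circ); the second equivalence uses
   that L_star is commutative and R_succ, R_odot, R_circ are the opposites of
   L_succ, L_odot, L_circ. *)

Section MatrixForms.
Variables (K : fieldType) (n : nat).
Notation A := 'rV[K]_n.
Implicit Types (f g : A -> A) (s M : 'M[K]_n) (u zeta eta : A).

Lemma mul_rV_lin1_linear f : linear f -> forall u, u *m lin1_mx f = f u.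
Proof.
move=> lin_f u.
exact: (mul_rV_lin1 (HB.pack f (GRing.isLinear.Build _ _ _ _ f lin_f)) u).
Qed.

Lemma linear_row_sum (V : lmodType K) (f : A -> V) : linear f ->
  forall u, f u = \sum_i u 0 i *: f (ebase K i).
Proof.
move=> lin_f u.
pose fL : {linear A -> V} := HB.pack f (GRing.isLinear.Build _ _ _ _ f lin_f).
rewrite -[f u]/(fL u) [in LHS](row_sum_delta u) linear_sum.
by apply: eq_bigr => i _; rewrite linearZ.
Qed.

Lemma lin1_mx_id : lin1_mx (@id A) = 1%:M.
Proof. by apply/matrixP => i j; rewrite !mxE eq_sym. Qed.

Lemma Ts_mulmx s zeta : Ts s zeta = zeta *m s.
Proof.
apply/rowP => j; rewrite !mxE; apply: eq_bigr => i _.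
rewrite (bigD1 j) //= big1 => [|k /negbTE neq_kj]; rewrite !mxE ?eqxx ?neq_kj /=.
  by rewrite mulr1 addr0 mulrC.
by rewrite mulr0.
Qed.

Lemma tmap_mulmx f g s : tmap f g s = (lin1_mx f)^T *m s *m lin1_mx g.
Proof.
apply/matrixP => k l; rewrite /tmap !mxE summxE.
under eq_bigr do rewrite summxE.
under [RHS]eq_bigr do rewrite !mxE big_distrl /=.
rewrite exchange_big /=; apply: eq_bigr => i _; apply: eq_bigr => j _.
by rewrite !mxE big_ord1 !mxE mulrA [_ * f _ _ _]mulrC.
Qed.

Lemma dualop_mulmx (F : A -> A -> A) x zeta :
  dualop F x zeta = - (zeta *m (lin1_mx (F x))^T).
Proof.
by apply/rowP => j; rewrite !mxE; congr (- _); apply: eq_bigr => k _; rewrite !mxE.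
Qed.

Lemma dualop_entry (F : A -> A -> A) x zeta i :
  dualop F x zeta 0 i = - (F x (ebase K i) *m zeta^T) 0 0.
Proof.
by rewrite !mxE; congr (- _); apply: eq_bigr => k _; rewrite !mxE mulrC.
Qed.

Lemma lin1_mx_linear (F : A -> A -> A) :
  (forall y, linear (F^~ y)) -> linear (fun x => lin1_mx (F x)).
Proof. by move=> linF a x y; apply/matrixP => i j; rewrite !mxE linF !mxE. Qed.

Lemma mulmx_rV_eq0 M : (forall u, u *m M = 0) -> M = 0.
Proof. by move=> M0; apply/row_matrixP => i; rewrite rowE M0 row0. Qed.

Lemma bilinear_form_eq0 M : (forall zeta eta, (zeta *m M *m eta^T) 0 0 = 0) -> M = 0.
Proof.
move=> M0; apply/matrixP => i j; have := M0 (delta_mx 0 i) (delta_mx 0 j).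
by rewrite -rowE trmx_delta -colE !mxE.
Qed.

End MatrixForms.

Section Bilinear.
Variables (K : fieldType) (n : nat).
Notation A := 'rV[K]_n.
Implicit Types (op : A -> A -> A).

Lemma bilinear_opl op : bilinear_op op -> forall y, linear (op^~ y).
Proof. by case=> linl _ y a u v; apply: linl. Qed.

Lemma bilinear_opr op : bilinear_op op -> forall x, linear (op x).
Proof. by case=> _ linr x a u v; apply: linr. Qed.

Lemma bilinear_opD op1 op2 : bilinear_op op1 -> bilinear_op op2 ->
  bilinear_op (fun x y => op1 x y + op2 x y).
Proof.
by move=> [l1 r1] [l2 r2]; split=> *; rewrite ?l1 ?l2 ?r1 ?r2 scalerDr addrACA.
Qed.

Lemma bilinear_op_flip op : bilinear_op op -> bilinear_op (fun x y => op y x).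
Proof. by case=> linl linr; split=> *; [apply: linr | apply: linl]. Qed.

End Bilinear.

Section InvarianceDefect.
Variables (K : fieldType) (n : nat) (F G : 'rV[K]_n -> 'rV[K]_n -> 'rV[K]_n).
Hypotheses (bilF : bilinear_op F) (bilG : bilinear_op G).
Notation A := 'rV[K]_n.
Implicit Types (s : 'M[K]_n) (x zeta eta : A).

Definition inv_defect s x := tmap id (F x) s - tmap (G x) id s.

Lemma inv_defectE s x :
  inv_defect s x = s *m lin1_mx (F x) - (lin1_mx (G x))^T *m s.
Proof. by rewrite /inv_defect !tmap_mulmx lin1_mx_id trmx1 mul1mx mulmx1. Qed.

Lemma inv_defect_linear s : linear (inv_defect s).
Proof.
move=> a x y; rewrite !inv_defectE !(lin1_mx_linear (bilinear_opl bilF)).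
rewrite !(lin1_mx_linear (bilinear_opl bilG)).
by rewrite !(linearD, linearZ) /= mulmxDl -scalemxAl scalerN opprD addrACA.
Qed.

Lemma inv_defect_eq0 s :
  (forall x, inv_defect s x = 0) <-> (forall i, inv_defect s (ebase K i) = 0).
Proof.
split=> [D0 i | D0 x] //; rewrite (linear_row_sum (inv_defect_linear s)).
by rewrite big1 // => i _; rewrite D0 scaler0.
Qed.

Lemma inv_defect_Ts s x zeta :
  F x (Ts s zeta) + Ts s (dualop G x zeta) = zeta *m inv_defect s x.
Proof.
rewrite inv_defectE !Ts_mulmx dualop_mulmx -(mul_rV_lin1_linear (bilinear_opr bilF x)).
by rewrite mulmxBr mulNmx !mulmxA.
Qed.

Lemma inv_defect_dualop s zeta eta (F' G' : A -> A -> A) i :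
    (forall a b, F' a b = F b a) -> (forall a b, G' a b = G b a) ->
  dualop F' (Ts s zeta) eta 0 i - dualop G' (Ts (tflip s) eta) zeta 0 i
    = - (zeta *m inv_defect s (ebase K i) *m eta^T) 0 0.
Proof.
move=> F'E G'E; rewrite !dualop_entry F'E G'E !Ts_mulmx.
rewrite -(mul_rV_lin1_linear (bilinear_opr bilF _)).
rewrite -(mul_rV_lin1_linear (bilinear_opr bilG _)).
have trE (M : 'M[K]_1) : M^T 0 0 = M 0 0 by rewrite mxE.
rewrite -[(eta *m _ *m _ *m zeta^T) 0 0]trE !trmx_mul !trmxK.
rewrite inv_defectE /tflip mulmxBr mulmxBl !mulmxA [in RHS]mxE.
by rewrite [X in - (_ + X)]mxE opprD opprK.
Qed.

Lemma Ts_identity_iff s :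
  (forall x zeta, F x (Ts s zeta) + Ts s (dualop G x zeta) = 0) <->
  (forall x, inv_defect s x = 0).
Proof.
split=> [eq0 x | D0 x zeta]; last by rewrite inv_defect_Ts D0 mulmx0.
by apply: mulmx_rV_eq0 => zeta; rewrite -inv_defect_Ts eq0.
Qed.

Lemma dualop_identity_iff s (F' G' : A -> A -> A) :
    (forall a b, F' a b = F b a) -> (forall a b, G' a b = G b a) ->
  (forall zeta eta, dualop F' (Ts s zeta) eta = dualop G' (Ts (tflip s) eta) zeta) <->
  (forall x, inv_defect s x = 0).
Proof.
move=> F'E G'E; split=> [eq0 | /inv_defect_eq0 D0 zeta eta].
  apply/inv_defect_eq0 => i; apply: bilinear_form_eq0 => zeta eta; apply/eqP.
  by rewrite -oppr_eq0 -(inv_defect_dualop _ _ _ _ F'E G'E) eq0 subrr.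
apply/rowP => i; apply/eqP.
by rewrite -subr_eq0 (inv_defect_dualop _ _ _ _ F'E G'E) D0 mulmx0 mul0mx mxE oppr0.
Qed.

End InvarianceDefect.

Section AntiPreNovikovProducts.
Variables (K : fieldType) (n : nat) (succ prec : 'rV[K]_n -> 'rV[K]_n -> 'rV[K]_n).
Hypotheses (bil_succ : bilinear_op succ) (bil_prec : bilinear_op prec).

Lemma bilinear_circ : bilinear_op (circ succ prec).
Proof. exact: bilinear_opD. Qed.

Lemma bilinear_Lstar : bilinear_op (Lstar succ prec).
Proof. exact: (bilinear_opD bilinear_circ (bilinear_op_flip bilinear_circ)). Qed.

Lemma bilinear_Lodot : bilinear_op (Lodot succ prec).
Proof. exact: (bilinear_opD bil_succ (bilinear_op_flip bil_prec)). Qed.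

Lemma LstarC x y : Lstar succ prec x y = Lstar succ prec y x.
Proof. exact: addrC. Qed.

Lemma invariant_tensorE s :
  invariant_tensor succ prec s <->
  (forall x, inv_defect (Lstar succ prec) (@Lsucc K n succ) s x = 0) /\
  (forall x, inv_defect (Lodot succ prec) (circ succ prec) s x = 0).
Proof.
rewrite /invariant_tensor /inv_defect.
split=> -[inv1 inv2]; split=> // x.
  by apply/eqP; rewrite -oppr_eq0 opprB; apply/eqP; exact: inv2.
by apply/eqP; rewrite -oppr_eq0 opprB; apply/eqP; exact: inv2.
Qed.

End AntiPreNovikovProducts.

Theorem mainTheorem9 (K : fieldType) (n : nat) (succ prec : 'rV[K]_n -> 'rV[K]_n -> 'rV[K]_n)
  (s : 'M[K]_n) :
  anti_pre_Novikov succ prec ->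
  (invariant_tensor succ prec s <->
     (forall (x zeta : 'rV[K]_n),
        Lstar succ prec x (Ts s zeta) + Ts s (dualop (@Lsucc K n succ) x zeta) = 0) /\
     (forall (x zeta : 'rV[K]_n),
        Lodot succ prec x (Ts s zeta) + Ts s (dualop (circ succ prec) x zeta) = 0)) /\
  ((forall (x zeta : 'rV[K]_n),
        Lstar succ prec x (Ts s zeta) + Ts s (dualop (@Lsucc K n succ) x zeta) = 0) /\
     (forall (x zeta : 'rV[K]_n),
        Lodot succ prec x (Ts s zeta) + Ts s (dualop (circ succ prec) x zeta) = 0)
   <->
   (forall (zeta eta : 'rV[K]_n),
      dualop (Lstar succ prec) (Ts s zeta) eta
        = dualop (@Rsucc K n succ) (Ts (tflip s) eta) zeta) /\
   (forall (zeta eta : 'rV[K]_n),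
      dualop (Rodot succ prec) (Ts s zeta) eta
        = dualop (Rcirc succ prec) (Ts (tflip s) eta) zeta)).
Proof.
move=> [bil_succ [bil_prec _]].
have bil_Lstar := bilinear_Lstar bil_succ bil_prec.
have bil_Lodot := bilinear_Lodot bil_succ bil_prec.
have bil_circ := bilinear_circ bil_succ bil_prec.
have inv_iff := invariant_tensorE succ prec s.
have Ts1_iff := Ts_identity_iff (@Lsucc K n succ) bil_Lstar s.
have Ts2_iff := Ts_identity_iff (circ succ prec) bil_Lodot s.
have dual1_iff := dualop_identity_iff bil_Lstar bil_succ s (LstarC succ prec) (fun _ _ => erefl).
have dual2_iff := dualop_identity_iff bil_Lodot bil_circ s
  (F' := Rodot succ prec) (G' := Rcirc succ prec) (fun _ _ => erefl) (fun _ _ => erefl).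
tauto.
Qed.
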